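(* Let $q\ge1$ and let $\mathcal{T}_q=(\tau_1,\ldots,\tau_q)$ be the permutation ideal in $S_{\mathcal{T}}$. Then (a) $\mathcal{T}_q$ is minimally generated by $\{\tau_1,\ldots,\tau_q\}$; (b) $\mathcal{T}_q^{\,2}$ is minimally generated by $\{\tau_i\tau_j:1\le i\le j\le q\}$, and in particular the minimal generating set of $\mathcal{T}_q^{\,2}$ has exactly $\binom{q}{2}+q$ elements.
   Context: Let $S_q$ be the symmetric group on $[q]=\{1,\ldots,q\}$; for $\sigma=i_1\cdots i_q$ in one-line notation, $\sigma(j)=i_j$. Let $K$ be a field, $S_{\mathcal{T}}=K[x_\sigma:\sigma\in S_q]$, $\tau_i=\prod_{\sigma\in S_q}x_\sigma^{\sigma(i)}$ for $i\in[q]$, and $\mathcal{T}_q=(\tau_1,\ldots,\tau_q)$ (the permutation ideal). *)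

From mathcomp Require Import all_boot all_fingroup all_algebra.
From mathcomp Require Export mpoly.
 Unset Strict Implicit. Unset Printing Implicit Defensive.
Import GRing.Theory.
Local Open Scope ring_scope.

Definition in_ideal {R : comNzRingType} (P : R -> Prop) (p : R) : Prop :=
  exists (gs cs : seq R), size cs = size gs /\ (forall g, g \in gs -> P g) /\
    p = \sum_(i < size gs) cs`_i * gs`_i.

Definition ideal_prod {R : comNzRingType} (I J : R -> Prop) : R -> Prop :=
  in_ideal (fun h => exists f g, I f /\ J g /\ h = f * g).

Definition gen_by {R : comNzRingType} (I : R -> Prop) (G : seq R) : Prop :=
  forall p, I p <-> in_ideal (fun g => g \in G) p.

Definition min_gen {R : comNzRingType} (I : R -> Prop) (G : seq R) : Prop :=
  gen_by I G /\
  forall G' : seq R, {subset G' <= G} -> gen_by I G' -> {subset G <= G'}.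

(* S_T = K[x_sigma : sigma in S_q]; variables indexed via enum_rank *)
Definition nvars (q : nat) : nat := #|{perm 'I_q}|.

Definition permRing (K : fieldType) (q : nat) :=
  {mpoly K[nvars q]}.

Definition xvar (K : fieldType) (q : nat) (s : {perm 'I_q}) : permRing K q :=
  'X_(enum_rank s).

(* tau_i = prod_sigma x_sigma^(sigma(i)); 'I_q is 0-based, so the paper's
   value sigma(i) in [q] is (s i).+1 *)
Definition tau (K : fieldType) (q : nat) (i : 'I_q) : permRing K q :=
  \prod_(s : {perm 'I_q}) xvar K q s ^+ (s i).+1.

Definition tau_gens (K : fieldType) (q : nat) : seq (permRing K q) :=
  [seq tau K q i | i <- enum 'I_q].

Definition permIdeal (K : fieldType) (q : nat) : permRing K q -> Prop :=
  in_ideal (fun g => g \in tau_gens K q).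

Definition tau2_gens (K : fieldType) (q : nat) : seq (permRing K q) :=
  [seq tau K q p.1 * tau K q p.2 | p <- [seq p : 'I_q * 'I_q <- enum [set: 'I_q * 'I_q] | (nat_of_ord p.1 <= nat_of_ord p.2)%N]].

(* Every generator in sight is a monomial: tau_i = x^(m_i) with
   m_i(sigma) = sigma(i).  An ideal generated by monomials whose exponents
   are pairwise incomparable is minimally generated by them, because the
   coefficient of x^M vanishes on every combination of monomials that do not
   divide x^M.  The m_i are incomparable: the identity and the transposition
   (i j) compare them in both directions.  So are the m_i + m_j for i <= j:
   the identity and the reversal of [q] force k + l = i + j whenever
   m_k + m_l <= m_i + m_j, and then a transposition separates distinct pairs. *)

From mathcomp Require Import all_boot all_fingroup all_algebra.
From mathcomp Require Import mpoly.
From mathcomp Require Import zify.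
Import GRing.Theory.
Local Open Scope ring_scope.

Section Ideals.
Variable R : comNzRingType.
Implicit Types P Q : R -> Prop.

Lemma in_ideal0 P : in_ideal P 0.
Proof. by exists [::], [::]; rewrite big_ord0. Qed.

Lemma in_ideal_gen P g : P g -> in_ideal P g.
Proof.
move=> Pg; exists [:: g], [:: 1]; split=> //; split.
  by move=> h; rewrite mem_seq1 => /eqP ->.
by rewrite big_ord1 mul1r.
Qed.

Lemma in_idealD P p1 p2 : in_ideal P p1 -> in_ideal P p2 -> in_ideal P (p1 + p2).
Proof.
move=> [gs1 [cs1 [s1 [P1 ->]]]] [gs2 [cs2 [s2 [P2 ->]]]].
exists (gs1 ++ gs2), (cs1 ++ cs2); split; first by rewrite !size_cat s1 s2.
split; first by move=> g; rewrite mem_cat => /orP[]; [apply: P1 | apply: P2].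
rewrite size_cat big_split_ord /=; congr (_ + _); apply: eq_bigr => i _.
  by rewrite !nth_cat /= s1 ltn_ord.
by rewrite !nth_cat /= s1 ltnNge leq_addr /= addKn.
Qed.

Lemma in_idealMl P c p : in_ideal P p -> in_ideal P (c * p).
Proof.
move=> [gs [cs [s [Pgs ->]]]]; exists gs, [seq c * x | x <- cs].
split; first by rewrite size_map.
split=> //; rewrite mulr_sumr; apply: eq_bigr => i _.
by rewrite (nth_map 0) ?s // mulrA.
Qed.

Lemma in_ideal_sum P (I : finType) (F : I -> R) :
  (forall i, in_ideal P (F i)) -> in_ideal P (\sum_i F i).
Proof.
by move=> PF; apply: (big_ind (in_ideal P)) => //; [exact: in_ideal0 | exact: in_idealD].
Qed.

Lemma in_ideal_trans P Q p :
  (forall g, P g -> in_ideal Q g) -> in_ideal P p -> in_ideal Q p.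
Proof.
move=> PQ [gs [cs [s [Pgs ->]]]]; apply: in_ideal_sum => i.
by apply/in_idealMl/PQ/Pgs; exact: mem_nth.
Qed.

Lemma ideal_prod_in_ideal P Q p :
  ideal_prod (in_ideal P) (in_ideal Q) p <->
  in_ideal (fun h => exists f g, P f /\ Q g /\ h = f * g) p.
Proof.
split; apply: in_ideal_trans => _ [f [g [Pf [Qg ->]]]]; last first.
  by apply: in_ideal_gen; exists f, g; split; [|split]; try apply: in_ideal_gen.
case: Pf => [fs [cs [s [Pfs ->]]]]; case: Qg => [gs [ds [t [Qgs ->]]]].
rewrite mulr_suml; apply: in_ideal_sum => a; rewrite mulr_sumr.
apply: in_ideal_sum => b; rewrite mulrACA; apply/in_idealMl/in_ideal_gen.
by exists fs`_a, gs`_b; split; [|split]; [apply/Pfs/mem_nth | apply/Qgs/mem_nth |].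
Qed.

End Ideals.

Section MonomialIdeals.
Variables (n : nat) (R : comNzRingType).
Implicit Types (m M : 'X_{1..n}) (p : {mpoly R[n]}).

Lemma mpolyX_inj : injective (fun m => 'X_[R, m]).
Proof.
move=> m m' /(congr1 (mcoeff m)); rewrite !mcoeffX eqxx.
by case: eqP => // _ /eqP; rewrite oner_eq0.
Qed.

Lemma mcoeffMX_eq0 p m M : ~~ (m <= M)%MM -> (p * 'X_[m])@_M = 0.
Proof.
move=> mM; rewrite {1}[p]mpolyE mulr_suml raddf_sum /=.
apply: big1 => m' _; rewrite -scalerAl -mpolyXD mcoeffZ mcoeffX.
by case: eqP => [e|_]; [move: mM; rewrite -e lem_addl | rewrite mulr0].
Qed.

Lemma mcoeff_monomial_ideal_eq0 {P : {mpoly R[n]} -> Prop} {p M} :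
  in_ideal P p ->
  (forall g, P g -> exists2 m, g = 'X_[m] & ~~ (m <= M)%MM) -> p@_M = 0.
Proof.
move=> [gs [cs [s [Pgs ->]]]] PX; rewrite raddf_sum /=; apply: big1 => i _.
by have [m -> mM] := PX _ (Pgs _ (mem_nth 0 (ltn_ord i))); exact: mcoeffMX_eq0.
Qed.

Lemma min_gen_monomials (I : {mpoly R[n]} -> Prop) (ms : seq 'X_{1..n}) :
  gen_by I [seq 'X_[m] | m <- ms] ->
  {in ms &, forall m m', (m <= m')%MM -> m = m'} ->
  min_gen I [seq 'X_[m] | m <- ms].
Proof.
move=> genI anti; split=> // G' sub genI' _ /mapP[M Mms ->].
apply/negPn/negP => XM'; suff : ('X_[M] : {mpoly R[n]})@_M = 0.
  by rewrite mcoeffX eqxx => /eqP; rewrite oner_eq0.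
have IXM : I 'X_[M] by apply/genI/in_ideal_gen/map_f.
apply: (mcoeff_monomial_ideal_eq0 ((genI' _).1 IXM)) => g gG'.
have /mapP[m mms gE] := sub _ gG'; exists m => //; apply/negP => /(anti _ _ mms Mms) mM.
by move: XM'; rewrite -mM -gE gG'.
Qed.

End MonomialIdeals.

Definition tau_mnm {q : nat} (i : 'I_q) : 'X_{1..nvars q} :=
  (\sum_(s : {perm 'I_q}) U_(enum_rank s) *+ (s i).+1)%MM.

Lemma tau_mnmE q (i : 'I_q) s : tau_mnm i (enum_rank s) = (s i).+1.
Proof.
rewrite /tau_mnm mnm_sumE (bigD1 s) //= big1 ?addn0.
  by rewrite mulmnE mnm1E eqxx mul1n.
move=> s' s's; rewrite mulmnE mnm1E.
by case: eqP => [/enum_rank_inj e|]; [move: s's; rewrite e eqxx | rewrite mul0n].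
Qed.

Lemma tauE K q (i : 'I_q) : tau K q i = 'X_[tau_mnm i].
Proof. by rewrite /tau /xvar mprodXnE. Qed.

Lemma nat_of_tperm q (a b x : 'I_q) : nat_of_ord (tperm a b x) =
  if x == a :> nat then b : nat else if x == b :> nat then a : nat else x.
Proof.
case: tpermP => [->|->|/eqP xa /eqP xb]; rewrite ?eqxx //; first by case: eqP.
by rewrite !(inj_eq val_inj) (negbTE xa) (negbTE xb).
Qed.

Lemma tau_mnm_le q (i j : 'I_q) : (tau_mnm i <= tau_mnm j)%MM -> i = j.
Proof.
move/mnm_lepP => le_ij; apply: val_inj => /=.
have := le_ij (enum_rank 1%g); have := le_ij (enum_rank (tperm i j)).
by rewrite !tau_mnmE !perm1 tpermL tpermR; lia.
Qed.

Definition rev_perm q : {perm 'I_q} := perm (@rev_ord_inj q).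

Lemma tau_mnm2_le {q} {i j k l : 'I_q} : (i <= j)%N -> (k <= l)%N ->
  (tau_mnm k + tau_mnm l <= tau_mnm i + tau_mnm j)%MM -> k = i /\ l = j.
Proof.
move=> ij kl /mnm_lepP le_mnm.
have le_at (s : {perm 'I_q}) : (s k + s l <= s i + s j)%N.
  by have := le_mnm (enum_rank s); rewrite !mnmDE !tau_mnmE; lia.
have sum_eq : (k + l = i + j)%N.
  have := le_at 1%g; have := le_at (rev_perm q); rewrite !perm1 !permE /=.
  by have := ltn_ord i; have := ltn_ord j; have := ltn_ord k; have := ltn_ord l; lia.
have [lt_ki|lt_ik|eq_ki] := ltngtP k i; last by split; apply/val_inj => /=; lia.
- have := le_at (tperm k i); rewrite !nat_of_tperm.
  by do !case: eqP; lia.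
- have := le_at (tperm l j); rewrite !nat_of_tperm.
  by do !case: eqP; lia.
Qed.

Definition le_pairs q : seq ('I_q * 'I_q) :=
  [seq p <- enum [set: 'I_q * 'I_q] | (nat_of_ord p.1 <= nat_of_ord p.2)%N].

Lemma mem_le_pairs q (p : 'I_q * 'I_q) : (p \in le_pairs q) = (p.1 <= p.2)%N.
Proof. by rewrite mem_filter mem_enum in_setT andbT. Qed.

Lemma size_le_pairs q : size (le_pairs q) = ('C(q, 2) + q)%N.
Proof.
rewrite size_filter -sum1_count big_enum_cond /=.
under eq_bigl do rewrite in_setT /=.
rewrite -(pair_big_dep xpredT (fun i j : 'I_q => (i <= j)%N) (fun _ _ => 1%N)) /=.
rewrite (exchange_big_dep xpredT) //=.
under eq_bigr => j _.
  rewrite (eq_bigl (fun i : 'I_q => true && (i < j.+1)%N)) => [|i]; last by rewrite ltnS.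
  rewrite -(big_ord_widen_cond q xpredT (fun _ => 1%N) (ltn_ord j)) sum1_card card_ord -addn1.
over.
by rewrite big_split /= sum1_card card_ord -(big_mkord xpredT (fun j => j)) bin2_sum.
Qed.

Lemma tau_gensE K q :
  tau_gens K q = [seq 'X_[m] | m <- [seq tau_mnm i | i <- enum 'I_q]].
Proof. by rewrite -map_comp; apply: eq_map => i; rewrite /= tauE. Qed.

Lemma tau2_gensE K q : tau2_gens K q =
  [seq 'X_[m] | m <- [seq (tau_mnm p.1 + tau_mnm p.2)%MM | p <- le_pairs q]].
Proof. by rewrite -map_comp; apply: eq_map => p; rewrite /= !tauE mpolyXD. Qed.

Lemma gen_by_tau2 K q :
  gen_by (ideal_prod (permIdeal K q) (permIdeal K q)) (tau2_gens K q).
Proof.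
move=> p; apply: iff_trans (ideal_prod_in_ideal _ _ _ p) _.
split; apply: in_ideal_trans => g.
- case=> _ [_ [/mapP[x _ ->] [/mapP[y _ ->] ->]]]; apply: in_ideal_gen.
  wlog le_xy : x y / (x <= y)%N.
    by move=> sym; case: (leqP x y) => [/sym // | /ltnW/sym]; rewrite mulrC.
  by apply/mapP; exists (x, y); rewrite ?mem_le_pairs.
- case/mapP=> [[i j]] _ ->; apply: in_ideal_gen.
  by exists (tau K q i), (tau K q j); split; [|split]; rewrite // map_f ?mem_enum.
Qed.

Lemma uniq_tau2_gens K q : uniq (tau2_gens K q).
Proof.
rewrite tau2_gensE (map_inj_uniq (@mpolyX_inj _ K)).
rewrite map_inj_in_uniq; first exact/filter_uniq/enum_uniq.
move=> -[k l] [i j]; rewrite !mem_le_pairs /= => kl ij eq_mnm.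
have le_mnm : (tau_mnm k + tau_mnm l <= tau_mnm i + tau_mnm j)%MM.
  by rewrite eq_mnm lepm_refl.
by have [-> ->] := tau_mnm2_le ij kl le_mnm.
Qed.

Theorem lemma4p3 (K : fieldType) (q : nat) (hq : (1 <= q)%N) :
  min_gen (permIdeal K q) (tau_gens K q) /\
  (min_gen (ideal_prod (permIdeal K q) (permIdeal K q)) (tau2_gens K q) /\
   size (undup (tau2_gens K q)) = ('C(q, 2) + q)%N).
Proof.
split; [|split].
- rewrite tau_gensE; apply: min_gen_monomials => [p|]; first by rewrite -tau_gensE.
  by move=> _ _ /mapP[i _ ->] /mapP[j _ ->] /tau_mnm_le ->.
- rewrite tau2_gensE; apply: min_gen_monomials; first by rewrite -tau2_gensE; exact: gen_by_tau2.
  move=> _ _ /mapP[[k l] + ->] /mapP[[i j] + ->]; rewrite !mem_le_pairs /= => kl ij.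
  by case/(tau_mnm2_le ij kl) => -> ->.
- by rewrite undup_id ?uniq_tau2_gens // size_map size_le_pairs.
Qed.
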